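(* Let $(G,\sigma)$ be a connection graph and $i\neq j\in V$, and write $\mathcal{C}^\sigma(i,j)=\begin{bmatrix}\mathcal{C}^\sigma_{ii}&\mathcal{C}^\sigma_{ij}\\ \mathcal{C}^\sigma_{ji}&\mathcal{C}^\sigma_{jj}\end{bmatrix}$. Then $$\mathcal{C}^\sigma(i,j)/\mathcal{C}^\sigma_{jj}=\deg(i)(I_{d\times d}-\Omega^1_i)\quad\text{and}\quad \mathcal{C}^\sigma(i,j)/\mathcal{C}^\sigma_{ii}=\deg(j)(I_{d\times d}-\Omega^1_j).$$
   Context: A connection graph $(G,\sigma)$: finite connected weighted graph $G=(V,E,W)$, $V=\{1,\dots,n\}$, $w_{xy}>0$ iff $\{x,y\}\in E$, $\deg(x)=\sum_y w_{xy}$, and $\sigma$ mapping oriented edges to $\mathsf{O}(d)$ with $\sigma_{yx}=\sigma_{xy}^{\mathrm T}$. Connection Laplacian $\mathcal{L}$: $nd\times nd$ block matrix with blocks $\deg(x)I_d$ on the diagonal, $-w_{xy}\sigma_{xy}$ for $x\sim y$, $0$ otherwise. For a block matrix $M=\begin{bmatrix}A&B\\C&D\end{bmatrix}$ with $A,D$ square, $M/A=D-CA^\dagger B$ and $M/D=A-BD^\dagger C$. The conductance matrix $\mathcal{C}^\sigma(i,j)=\mathcal{L}/\mathcal{L}_{\{i,j\}^c,\{i,j\}^c}$, blocks ordered $i$ then $j$. $(X_t)$: simple random walk with transition probabilities $w_{xy}/\deg(x)$; $T^1_i=\inf\{t\ge1:X_t=i\}$; $\Omega^1_i=\mathbb{E}\big[\prod_{\ell=1}^{T^1_i}\sigma_{X_{\ell-1}X_\ell}\mid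 X_0=i\big]$ (ordered product). *)

From HB Require Import structures.
From mathcomp Require Import all_boot all_order all_algebra.
From mathcomp Require Import boolp classical_sets filter reals topology normedtype.
Set Implicit Arguments. Unset Strict Implicit. Unset Printing Implicit Defensive.
Import numFieldNormedType.Exports.
Import Order.TTheory GRing.Theory Num.Theory.
Local Open Scope ring_scope.

Section ConnectionGraph.
Variables (R : realType) (n d : nat).
Variable w : 'I_n -> 'I_n -> R.             (* edge weights; w x y > 0 iff x ~ y *)
Variable sigma : 'I_n -> 'I_n -> 'M[R]_d.

Definition deg (x : 'I_n) : R := \sum_(y < n) w x y.

Definition connection_graph : Prop :=
  [/\ forall x y, w x y = w y x,
      forall x y, 0 <= w x y,
      forall x, w x x = 0
    & forall x y, connect [rel a b | 0 < w a b] x y] /\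
  [/\ forall x y, 0 < w x y -> sigma y x = (sigma x y)^T
    & forall x y, 0 < w x y ->
        (sigma x y)^T *m sigma x y = 1%:M /\ sigma x y *m (sigma x y)^T = 1%:M].

Definition lap_block (x y : 'I_n) : 'M[R]_d :=
  if x == y then (deg x)%:M else - (w x y *: sigma x y).

(* the submatrix L_{A,B} of the connection Laplacian, for ordered lists of
   vertices A and B (block rows indexed by A, block columns indexed by B) *)
Definition lap_sub (A B : seq 'I_n) :
    'M[R]_(\sum_(p < size A) d, \sum_(q < size B) d) :=
  @mxblock R _ _ (fun _ => d) (fun _ => d)
    (fun p q => lap_block (tnth (in_tuple A) p) (tnth (in_tuple B) q)).

End ConnectionGraph.

Definition is_pinv (R : realType) m k (A : 'M[R]_(m, k)) (X : 'M[R]_(k, m)) :=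
  [/\ A *m X *m A = A, X *m A *m X = X, (A *m X)^T = A *m X & (X *m A)^T = X *m A].

Definition pinv (R : realType) m k (A : 'M[R]_(m, k)) : 'M[R]_(k, m) :=
  xget 0 [set X | is_pinv A X].

Definition schurA (R : realType) a b (A : 'M[R]_a) (B : 'M[R]_(a, b))
  (C : 'M[R]_(b, a)) (D : 'M[R]_b) : 'M[R]_b := D - C *m pinv A *m B.
Definition schurD (R : realType) a b (A : 'M[R]_a) (B : 'M[R]_(a, b))
  (C : 'M[R]_(b, a)) (D : 'M[R]_b) : 'M[R]_a := A - B *m pinv D *m C.

Section Conductance.
Variables (R : realType) (n d : nat) (w : 'I_n -> 'I_n -> R)
  (sigma : 'I_n -> 'I_n -> 'M[R]_d).

(* conductance matrix C^sigma(i,j) = L / L_{{i,j}^c,{i,j}^c}, blocks ordered i, j *)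
Definition conductance (i j : 'I_n) : 'M[R]_(\sum_(p < 2) d) :=
  let S := [:: i; j] in
  let Sc := [seq x <- enum 'I_n | x \notin S] in
  schurD (lap_sub w sigma S S) (lap_sub w sigma S Sc)
         (lap_sub w sigma Sc S) (lap_sub w sigma Sc Sc).

(* its d x d blocks:  C_ii = blk 0 0, C_ij = blk 0 1, C_ji = blk 1 0, C_jj = blk 1 1 *)
Definition cond_blk (i j : 'I_n) (p q : 'I_2) : 'M[R]_d :=
  @submxblock R _ _ (fun _ => d) (fun _ => d) (conductance i j) p q.

Definition trans (x y : 'I_n) : R := w x y / deg w x.

Fixpoint walk_prob (x : 'I_n) (s : seq 'I_n) : R :=
  if s is y :: s' then trans x y * walk_prob y s' else 1.

Fixpoint walk_hol (x : 'I_n) (s : seq 'I_n) : 'M[R]_d :=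
  if s is y :: s' then sigma x y *m walk_hol y s' else 1%:M.

(* contribution of the event {T^1_i = t+1}: paths i, s_1, ..., s_t, i
   with all s_k <> i *)
Definition excursion_term (i : 'I_n) (t : nat) : 'M[R]_d :=
  \sum_(s : t.-tuple 'I_n | all (fun v => v != i) s)
     walk_prob i (rcons s i) *: walk_hol i (rcons s i).

(* Omega^1_i = E[ prod_{l=1}^{T^1_i} sigma_{X_{l-1} X_l} | X_0 = i ], the
   expectation written as the (convergent) series over the value of T^1_i *)
Definition Omega1 (i : 'I_n) : 'M[R]_d :=
  \matrix_(a, b) limn (fun N : nat => (\sum_(t < N) excursion_term i t) a b).

End Conductance.

From HB Require Import structures.
From mathcomp Require Import all_boot all_order all_algebra.
From mathcomp Require Import boolp classical_sets filter reals topology normedtype.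
From mathcomp Require Import sequences.
From mathcomp Require Import ring lra.
Set Implicit Arguments. Unset Strict Implicit. Unset Printing Implicit Defensive.
Import numFieldNormedType.Exports.
Import Order.TTheory GRing.Theory Num.Theory.
Local Open Scope ring_scope.

(* Call f : V -> 'M_(d, k) harmonic at x when (L f)(x) = 0.  If f is harmonic
   off S = {i, j}, eliminating the unknowns f|_{S^c} gives
   (L f)|_S = C^sigma(i, j) f|_S (Kron reduction).  The harmonic extension f of
   f(i) = I, f(j) = - C_jj^-1 C_ji is then harmonic at j as well, and
   (L f)(i) = C^sigma(i, j) / C_jj.  Being harmonic off i with f(i) = I, this f
   is f(x) = E_x[sigma-product along the walk up to T_i], so first-step
   analysis at i gives (L f)(i) = deg(i) (I - Omega^1_i); symmetrically at j.
   The invertibility of L on {i, j}^c and of C_jj, which turns the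
   pseudo-inverses into inverses, comes from a maximum principle: the walk
   killed on hitting a vertex dies out geometrically fast, and the orthogonal
   sigma cannot increase the Frobenius norm, so a function harmonic off a
   vertex where it vanishes is zero. *)

Section FrobeniusNorm.
Variable R : realDomainType.

Lemma sqr_wsum_le (I : finType) (P : pred I) (p z : I -> R) :
  (forall y, P y -> 0 <= p y) ->
  (\sum_(y | P y) p y * z y) ^+ 2 <=
  (\sum_(y | P y) p y) * \sum_(y | P y) p y * z y ^+ 2.
Proof.
move=> p_ge0.
set s := \sum_(y | P y) p y; set m := \sum_(y | P y) p y * z y.
set t := \sum_(y | P y) p y * z y ^+ 2.
have s_ge0 : 0 <= s by apply: sumr_ge0.
(* the variance identity  sum_y p_y (s z_y - m)^2 = s (s t - m^2) *)
have variance : \sum_(y | P y) p y * (s * z y - m) ^+ 2 = s * (s * t - m ^+ 2).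
  rewrite (eq_bigr (fun y => s ^+ 2 * (p y * z y ^+ 2) - (2 * s * m) * (p y * z y)
     + m ^+ 2 * p y)); last by move=> y _; ring.
  rewrite big_split /= sumrB -!mulr_sumr -/s -/m -/t; clearbody s m t; ring.
have : 0 <= s * (s * t - m ^+ 2).
  rewrite -variance; apply: sumr_ge0 => y Py; exact: mulr_ge0 (p_ge0 y Py) (sqr_ge0 _).
have [s0|s_neq0] := eqVneq s 0.
  have -> : m = 0 by rewrite /m big1 // => y Py; rewrite (psumr_eq0P p_ge0 s0 Py) mul0r.
  by rewrite s0 !mul0r expr0n.
by rewrite pmulr_rge0 ?subr_ge0 // lt_def s_neq0.
Qed.

Definition frob2 m k (X : 'M[R]_(m, k)) : R := \sum_a \sum_b X a b ^+ 2.

Lemma frob2_ge0 m k (X : 'M[R]_(m, k)) : 0 <= frob2 X.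
Proof. by apply: sumr_ge0 => a _; apply: sumr_ge0 => b _; exact: sqr_ge0. Qed.

Lemma sqr_entry_le_frob2 m k (X : 'M[R]_(m, k)) a b : X a b ^+ 2 <= frob2 X.
Proof.
rewrite /frob2 (bigD1 a) //= (bigD1 b) //= -addrA lerDl.
apply: addr_ge0; first by apply: sumr_ge0 => c _; exact: sqr_ge0.
by apply: sumr_ge0 => c _; apply: sumr_ge0 => e _; exact: sqr_ge0.
Qed.

Lemma frob2_le0 m k (X : 'M[R]_(m, k)) : frob2 X <= 0 -> X = 0.
Proof.
move=> X_le0; apply/matrixP => a b; rewrite mxE.
apply/eqP; rewrite -sqrf_eq0 eq_le sqr_ge0 andbT.
exact: le_trans (sqr_entry_le_frob2 X a b) X_le0.
Qed.

Lemma frob2_trace m k (X : 'M[R]_(m, k)) : frob2 X = \tr (X^T *m X).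
Proof.
rewrite /frob2 /mxtrace exchange_big; apply: eq_bigr => b _; rewrite mxE.
by apply: eq_bigr => a _; rewrite !mxE expr2.
Qed.

Lemma frob2_orthogonal m k (S : 'M[R]_m) (X : 'M[R]_(m, k)) :
  S^T *m S = 1%:M -> frob2 (S *m X) = frob2 X.
Proof. by move=> SS; rewrite !frob2_trace trmx_mul mulmxA -(mulmxA X^T) SS mulmx1. Qed.

Lemma frob2_wsum_le m k (I : finType) (P : pred I) (p : I -> R)
    (Z : I -> 'M[R]_(m, k)) :
  (forall y, P y -> 0 <= p y) -> \sum_(y | P y) p y <= 1 ->
  frob2 (\sum_(y | P y) p y *: Z y) <= \sum_(y | P y) p y * frob2 (Z y).
Proof.
move=> p_ge0 p_le1.
have entries a b : (\sum_(y | P y) p y *: Z y) a b = \sum_(y | P y) p y * Z y a b.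
  by rewrite summxE; apply: eq_bigr => y _; rewrite mxE.
have swap : \sum_(y | P y) p y * frob2 (Z y) =
            \sum_a \sum_b \sum_(y | P y) p y * Z y a b ^+ 2.
  rewrite /frob2; under eq_bigr do rewrite mulr_sumr.
  rewrite exchange_big /=; apply: eq_bigr => a _.
  by under eq_bigr do rewrite mulr_sumr; rewrite exchange_big.
apply: le_trans (_ : _ <= (\sum_(y | P y) p y) * \sum_(y | P y) p y * frob2 (Z y)) _.
  rewrite swap mulr_sumr; apply: ler_sum => a _; rewrite mulr_sumr.
  by apply: ler_sum => b _; rewrite entries; exact: sqr_wsum_le.
rewrite ler_piMl //.
by apply: sumr_ge0 => y Py; exact: mulr_ge0 (p_ge0 y Py) (frob2_ge0 _).
Qed.

End FrobeniusNorm.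

Lemma mulmx_eq0_unitmx (F : fieldType) m (A : 'M[F]_m) :
  (forall v : 'cV[F]_m, A *m v = 0 -> v = 0) -> A \in unitmx.
Proof.
move=> A_inj; rewrite -unitmx_tr -row_free_unit; apply: inj_row_free => v vA0.
apply: trmx_inj; rewrite trmx0; apply: A_inj.
by rewrite -[A]trmxK -trmx_mul vA0 trmx0.
Qed.

Lemma pinv_invmx (R : realType) m (A : 'M[R]_m) : A \in unitmx -> pinv A = invmx A.
Proof.
move=> A_unit.
have : is_pinv A (pinv A).
  apply: (@xgetPex _ 0 (fun X => is_pinv A X)); exists (invmx A).
  by rewrite /is_pinv (mulmxV A_unit) mul1mx (mulVmx A_unit) mul1mx trmx1.
case=> AXA _ _ _.
have -> : pinv A = invmx A *m (A *m pinv A *m A) *m invmx A.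
  by rewrite !mulmxA (mulVmx A_unit) mul1mx -mulmxA (mulmxV A_unit) mulmx1.
by rewrite AXA (mulVmx A_unit) mul1mx.
Qed.

Lemma ord2_neqE (p q r : 'I_2) : p != q -> (r != p) = (r == q).
Proof. by case: p q r => [[|[|//]] ?] [[|[|//]] ?] [[|[|//]] ?]. Qed.

Lemma sum_ord2 (V : nmodType) (p q : 'I_2) (F : 'I_2 -> V) : p != q ->
  \sum_r F r = F p + F q.
Proof. by move=> pq; rewrite (bigD1 p) // (big_pred1 q) // => r; exact: ord2_neqE. Qed.

Section KilledWalk.
Variables (R : realType) (n : nat) (w : 'I_n -> 'I_n -> R).
Hypothesis w_ge0 : forall x y, 0 <= w x y.

Lemma trans_ge0 x y : 0 <= trans w x y.
Proof. by rewrite /trans divr_ge0 ?sumr_ge0. Qed.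

Lemma w_le_deg x y : w x y <= deg w x.
Proof. by rewrite /deg (bigD1 y) //= lerDl sumr_ge0. Qed.

Lemma deg_neq0 x y : 0 < w x y -> deg w x != 0.
Proof. by move=> xy; rewrite gt_eqF // (lt_le_trans xy (w_le_deg x y)). Qed.

Lemma trans_gt0 x y : 0 < w x y -> 0 < trans w x y.
Proof. by move=> xy; rewrite /trans divr_gt0 // (lt_le_trans xy (w_le_deg x y)). Qed.

Lemma sum_trans x : deg w x != 0 -> \sum_y trans w x y = 1.
Proof. by move=> dx; rewrite /trans -mulr_suml mulfV. Qed.

Lemma sum_trans_le1 (P : pred 'I_n) x : \sum_(y | P y) trans w x y <= 1.
Proof.
apply: le_trans (_ : \sum_y trans w x y <= 1).
  by rewrite [leRHS](bigID P) /= lerDl sumr_ge0 // => y _; exact: trans_ge0.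
have [dx0|/sum_trans -> //] := eqVneq (deg w x) 0.
by rewrite big1 // => y _; rewrite /trans dx0 invr0 mulr0.
Qed.

Section Survival.
Variable W : pred 'I_n.

Definition walk_op (f : 'I_n -> R) x : R := \sum_(y | W y) trans w x y * f y.

(* the probability that the walk started at x stays in W for N steps *)
Definition survival N : 'I_n -> R := iter N walk_op (fun _ => 1).

Lemma iter_walk_op_le (f g : 'I_n -> R) : (forall y, W y -> f y <= g y) ->
  forall N x, W x -> iter N walk_op f x <= iter N walk_op g x.
Proof.
move=> fg; elim=> [|N IH] x Wx /=; first exact: fg.
by apply: ler_sum => y Wy; rewrite ler_wpM2l ?trans_ge0 ?IH.
Qed.

Lemma iter_walk_opZ (c : R) (f : 'I_n -> R) N :
  iter N walk_op (fun y => c * f y) = (fun x => c * iter N walk_op f x).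
Proof.
elim: N => //= N ->; apply: funext => x; rewrite /walk_op mulr_sumr.
by apply: eq_bigr => y _; rewrite mulrCA.
Qed.

Lemma survival_ge0 N x : 0 <= survival N x.
Proof.
elim: N x => [|N IH] x /=; first exact: ler01.
by apply: sumr_ge0 => y _; rewrite mulr_ge0 ?trans_ge0 ?IH.
Qed.

Lemma survival_le1 N x : survival N x <= 1.
Proof.
elim: N x => [|N IH] x //=; apply: le_trans (sum_trans_le1 W x).
by apply: ler_sum => y _; rewrite ler_piMr ?trans_ge0 ?IH.
Qed.

Lemma survival_le N M x : W x -> (N <= M)%N -> survival M x <= survival N x.
Proof.
move=> Wx /subnK <-; elim: (M - N)%N => [|k IH] //; apply: le_trans IH.
rewrite addSn /survival iterSr.
by apply: iter_walk_op_le => // y _; exact: (survival_le1 1).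
Qed.

Lemma survival_lt1_step x z k : 0 < w x z -> (W z -> survival k z < 1) ->
  survival k.+1 x < 1.
Proof.
move=> xz kz; rewrite /survival iterS -/(survival k) /walk_op big_mkcond /=.
rewrite -(sum_trans (deg_neq0 xz)) (bigD1 z) //= [ltRHS](bigD1 z) //=.
apply: ltr_leD.
  by case: ifP => Wz; rewrite ?gtr_pMr ?trans_gt0 ?kz.
by apply: ler_sum => y _; case: ifP; rewrite ?ler_piMr ?trans_ge0 ?survival_le1.
Qed.

Lemma survival_geom m (c : R) : 0 <= c -> (forall x, W x -> survival m x <= c) ->
  forall k x, W x -> survival (k * m) x <= c ^+ k.
Proof.
move=> c_ge0 mc; elim=> [|k IH] x Wx; first by rewrite mul0n expr0.
rewrite mulSn /survival iterD -/(survival (k * m)).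
apply: le_trans (iter_walk_op_le (g := fun _ => c ^+ k * 1) _ m Wx) _.
  by move=> y Wy; rewrite mulr1 IH.
rewrite iter_walk_opZ exprSr mulrC [leRHS]mulrC.
by apply: ler_wpM2r; [exact: exprn_ge0 | exact: mc].
Qed.

Variable a : 'I_n.
Hypotheses (Wa : ~~ W a) (reach_a : forall x, connect [rel u v | 0 < w u v] x a).

Lemma survival_lt1 x : W x -> exists k, survival k x < 1.
Proof.
have /connectP [p] := reach_a x; elim: p x => [|z p IH] x /=.
  by move=> _ <-; rewrite (negbTE Wa).
case/andP => xz zp pa Wx; case Wz: (W z).
  have [k zk] := IH z zp pa Wz.
  by exists k.+1; exact: survival_lt1_step xz (fun _ => zk).
by exists 1%N; apply: survival_lt1_step xz _; rewrite Wz.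
Qed.

Lemma survival_unif_lt1 :
  exists m (c : R), [/\ 0 <= c, c < 1 & forall x, W x -> survival m x <= c].
Proof.
have /fin_all_exists [k xk] : forall x, exists k, W x -> survival k x < 1.
  move=> x; case Wx: (W x); last by exists 0%N.
  by have [k xk] := survival_lt1 Wx; exists k.
pose m := (\max_x k x)%N.
exists m, (\big[Order.max/0]_(x | W x) survival m x); split.
- exact: bigmax_ge_id.
- apply: bigmax_lt => // x Wx.
  exact: le_lt_trans (survival_le Wx (leq_bigmax x)) (xk x Wx).
- by move=> x Wx; exact: le_bigmax_cond.
Qed.

Lemma survival_vanish (eps : R) : 0 < eps ->
  exists N, forall M, (N <= M)%N -> forall x, W x -> survival M x < eps.
Proof.
move=> eps_gt0; have [m [c [c_ge0 c_lt1 mc]]] := survival_unif_lt1.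
have c_cvg0 : ((c ^+ k) @[k --> \oo] --> 0)%classic.
  by apply: cvg_expr; rewrite ger0_norm.
have /cvgrPdist_lt/(_ eps eps_gt0) [N _ Nc] := c_cvg0.
exists (N * m)%N => M NM x Wx.
apply: le_lt_trans (survival_le Wx NM) _.
apply: le_lt_trans (survival_geom c_ge0 mc N Wx) _.
by have := Nc N (leqnn N); rewrite /= sub0r normrN ger0_norm ?exprn_ge0.
Qed.

End Survival.
End KilledWalk.

Section ConnectionWalk.
Variables (R : realType) (n d : nat) (w : 'I_n -> 'I_n -> R)
  (sigma : 'I_n -> 'I_n -> 'M[R]_d).
Hypotheses (w_ge0 : forall x y, 0 <= w x y) (w_diag : forall x, w x x = 0)
  (conn : forall x y, connect [rel u v | 0 < w u v] x y)
  (sigma_orth : forall x y, 0 < w x y -> (sigma x y)^T *m sigma x y = 1%:M).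

(* iter N (conn_op W) f x is the expectation of the sigma-product along the
   first N steps times f(X_N), over the walks from x that stay in W. *)
Definition conn_op k (W : pred 'I_n) (f : 'I_n -> 'M[R]_(d, k)) x : 'M[R]_(d, k) :=
  \sum_(y | W y) trans w x y *: (sigma x y *m f y).

Lemma trans_eq0_or_orthogonal x y :
  trans w x y = 0 \/ (sigma x y)^T *m sigma x y = 1%:M.
Proof.
have /predU1P [xy0|xy] : (0 == w x y) || (0 < w x y) by rewrite -le_eqVlt w_ge0.
  by left; rewrite /trans -xy0 mul0r.
by right; exact: sigma_orth.
Qed.

Lemma frob2_conn_op k (W : pred 'I_n) (f : 'I_n -> 'M[R]_(d, k)) x :
  frob2 (conn_op W f x) <= walk_op w W (fun y => frob2 (f y)) x.
Proof.
have p_ge0 y : W y -> 0 <= trans w x y by move=> _; exact: trans_ge0.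
apply: le_trans (frob2_wsum_le _ p_ge0 (sum_trans_le1 w_ge0 W x)) _.
apply: ler_sum => y _; case: (trans_eq0_or_orthogonal x y) => [-> | orth].
  by rewrite !mul0r.
by rewrite frob2_orthogonal.
Qed.

Lemma frob2_iter_conn_op k (W : pred 'I_n) (f : 'I_n -> 'M[R]_(d, k)) (K : R) :
  (forall y, frob2 (f y) <= K) ->
  forall N x, frob2 (iter N (conn_op W) f x) <= K * survival w W N x.
Proof.
move=> fK; elim=> [|N IH] x /=; first by rewrite mulr1.
apply: le_trans (frob2_conn_op _ _ _) _; rewrite /walk_op mulr_sumr.
by apply: ler_sum => y _; rewrite mulrCA ler_wpM2l ?trans_ge0.
Qed.

Lemma iter_conn_op_vanish k (W : pred 'I_n) a (f : 'I_n -> 'M[R]_(d, k)) (eps : R) :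
  ~~ W a -> 0 < eps ->
  exists N, forall M, (N <= M)%N ->
    forall x, W x -> frob2 (iter M (conn_op W) f x) < eps.
Proof.
move=> Wa eps_gt0; set K := \sum_y frob2 (f y).
have fy_ge0 y : 0 <= frob2 (f y) by exact: frob2_ge0.
have K_ge0 : 0 <= K by exact: sumr_ge0.
have fK y : frob2 (f y) <= K by rewrite /K (bigD1 y) //= lerDl sumr_ge0.
have K1_gt0 : 0 < K + 1 by rewrite ltr_wpDl.
have [N Ns] :=
  survival_vanish w_ge0 Wa (fun x => conn x a) (divr_gt0 eps_gt0 K1_gt0).
exists N => M NM x Wx; apply: le_lt_trans (frob2_iter_conn_op W fK M x) _.
have := Ns M NM x Wx; rewrite ltr_pdivlMr // => s_lt.
have := survival_ge0 w_ge0 W M x; nra.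
Qed.

Lemma conn_op_entry_le k (W : pred 'I_n) (g : 'I_n -> 'M[R]_(d, k)) x (e : R) r c :
  0 <= e -> (forall y, W y -> frob2 (g y) <= e ^+ 2) -> `|conn_op W g x r c| <= e.
Proof.
move=> e_ge0 ge; rewrite /conn_op summxE; apply: le_trans (ler_norm_sum _ _ _) _.
apply: le_trans (_ : _ <= \sum_(y | W y) trans w x y * e) _; last first.
  by rewrite -mulr_suml ler_piMl ?sum_trans_le1.
apply: ler_sum => y Wy; rewrite mxE normrM ger0_norm ?trans_ge0 //.
case: (trans_eq0_or_orthogonal x y) => [-> | orth]; first by rewrite !mul0r.
rewrite ler_wpM2l ?trans_ge0 //.
have := sqr_entry_le_frob2 (sigma x y *m g y) r c.
rewrite frob2_orthogonal // => /le_trans/(_ (ge y Wy)).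
by rewrite -ler_sqr ?nnegrE // real_normK ?num_real.
Qed.

Definition lap_app k (f : 'I_n -> 'M[R]_(d, k)) x : 'M[R]_(d, k) :=
  \sum_y lap_block w sigma x y *m f y.

Lemma lap_appE k (f : 'I_n -> 'M[R]_(d, k)) x :
  lap_app f x = deg w x *: f x - \sum_y w x y *: (sigma x y *m f y).
Proof.
rewrite /lap_app (bigD1 x) //= [in RHS](bigD1 x) //= w_diag scale0r add0r.
rewrite /lap_block eqxx mul_scalar_mx -sumrN; congr (_ + _).
by apply: eq_bigr => y yx; rewrite eq_sym (negbTE yx) mulNmx -scalemxAl.
Qed.

Lemma harmonic_mean k (f : 'I_n -> 'M[R]_(d, k)) x :
  lap_app f x = 0 -> deg w x != 0 -> f x = \sum_y trans w x y *: (sigma x y *m f y).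
Proof.
rewrite lap_appE => /eqP; rewrite subr_eq0 => /eqP fx dx.
rewrite -[LHS]scale1r -(mulVf dx) -scalerA fx scaler_sumr.
by apply: eq_bigr => y _; rewrite scalerA mulrC.
Qed.

Lemma connected_deg_neq0 x z : z != x -> deg w x != 0.
Proof.
move=> zx; have /connectP [[|y p] /= xp zp] := conn x z.
  by rewrite zp eqxx in zx.
by case/andP: xp => xy _; exact: (deg_neq0 w_ge0 (y := y)).
Qed.

(* f = iter N (conn_op W) f on W, whose Frobenius norm vanishes as N grows. *)
Lemma harmonic_eq0 k (W : pred 'I_n) a (f : 'I_n -> 'M[R]_(d, k)) : ~~ W a ->
  (forall x, ~~ W x -> f x = 0) -> (forall x, W x -> lap_app f x = 0) ->
  forall x, f x = 0.
Proof.
move=> Wa f0 f_harm.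
have f_fix x : W x -> f x = conn_op W f x.
  move=> Wx; have ax : a != x by apply: contraNneq Wa => ->.
  rewrite [LHS](harmonic_mean (f_harm x Wx) (connected_deg_neq0 ax)) (bigID W) /=.
  by rewrite [X in _ + X]big1 ?addr0 // => y /f0 ->; rewrite mulmx0 scaler0.
have f_iter N x : W x -> iter N (conn_op W) f x = f x.
  elim: N x => [|N IH] x Wx //=; rewrite [RHS]f_fix //.
  by apply: eq_bigr => y Wy; rewrite IH.
move=> x; case Wx: (W x); last by apply: f0; rewrite Wx.
apply: frob2_le0; apply/ler_addgt0Pr => eps eps_gt0; rewrite add0r.
have [N Nf] := iter_conn_op_vanish f Wa eps_gt0.
by rewrite -(f_iter N x Wx) ltW ?Nf.
Qed.

Lemma eq_iter_conn_op k (W : pred 'I_n) (f g : 'I_n -> 'M[R]_(d, k)) :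
  (forall y, W y -> f y = g y) ->
  forall N x, W x -> iter N (conn_op W) f x = iter N (conn_op W) g x.
Proof.
move=> fg; elim=> [|N IH] x Wx /=; first exact: fg.
by apply: eq_bigr => y Wy; rewrite IH.
Qed.

Lemma iter_conn_opD k (W : pred 'I_n) (f g : 'I_n -> 'M[R]_(d, k)) N x :
  iter N (conn_op W) (fun y => f y + g y) x =
  iter N (conn_op W) f x + iter N (conn_op W) g x.
Proof.
elim: N x => [|N IH] x //=; rewrite /conn_op -big_split /=.
by apply: eq_bigr => y _; rewrite IH mulmxDr scalerDr.
Qed.

Section Excursions.
Variable a : 'I_n.

Definition hit_term t x : 'M[R]_d :=
  \sum_(s : t.-tuple 'I_n | all (fun v => v != a) s)
     walk_prob w x (rcons s a) *: walk_hol sigma x (rcons s a).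

Lemma excursion_termE t : excursion_term w sigma a t = hit_term t a.
Proof. by []. Qed.

Lemma hit_term0 x : hit_term 0 x = trans w x a *: sigma x a.
Proof.
rewrite /hit_term (big_pred1 [tuple]) => [|s]; last by rewrite tuple0.
by rewrite /= mulr1 mulmx1.
Qed.

Lemma hit_termS t x : hit_term t.+1 x = conn_op (predC1 a) (hit_term t) x.
Proof.
pose cons_tuple (ys : 'I_n * t.-tuple 'I_n) := [tuple of ys.1 :: ys.2].
have cons_bij : bijective cons_tuple.
  exists (fun s : t.+1.-tuple 'I_n => (thead s, [tuple of behead s])).
    by case=> y s; rewrite /cons_tuple /= theadE; congr pair; apply: val_inj.
  by move=> s; rewrite /cons_tuple /= [in RHS](tuple_eta s).
rewrite /hit_term (reindex cons_tuple) /=; last exact: onW_bij.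
rewrite -(pair_big_dep (predC1 a)
  (fun (_ : 'I_n) (s : t.-tuple 'I_n) => all (fun v => v != a) s)
  (fun (y : 'I_n) (s : t.-tuple 'I_n) =>
     walk_prob w x (rcons (cons_tuple (y, s)) a) *:
     walk_hol sigma x (rcons (cons_tuple (y, s)) a))).
apply: eq_bigr => y _; rewrite mulmx_sumr scaler_sumr.
by apply: eq_bigr => s _ /=; rewrite -scalerA scalemxAr.
Qed.

Lemma hit_term_iter t : hit_term t = iter t (conn_op (predC1 a)) (hit_term 0).
Proof. by elim: t => //= t <-; apply: funext => x; rewrite hit_termS. Qed.

Variable h : 'I_n -> 'M[R]_d.
Hypotheses (h_a : h a = 1%:M) (h_harm : forall x, x != a -> lap_app h x = 0).

Lemma harmonic_first_step x : x != a -> h x = hit_term 0 x + conn_op (predC1 a) h x.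
Proof.
move=> xa; have dx : deg w x != 0 by apply: (@connected_deg_neq0 x a); rewrite eq_sym.
by rewrite {1}(harmonic_mean (h_harm xa) dx) (bigD1 a) //= h_a mulmx1 hit_term0.
Qed.

Lemma harmonic_expand N x : x != a ->
  h x = \sum_(t < N) hit_term t x + iter N (conn_op (predC1 a)) h x.
Proof.
move=> xa; elim: N => [|N IH]; first by rewrite big_ord0 add0r.
rewrite IH big_ord_recr /= -addrA; congr (_ + _).
rewrite (eq_iter_conn_op harmonic_first_step) // iter_conn_opD -hit_term_iter.
by rewrite -iterSr.
Qed.

Lemma excursion_partial_sum N :
  \sum_(t < N.+1) excursion_term w sigma a t =
  conn_op (predC1 a) h a - conn_op (predC1 a) (iter N (conn_op (predC1 a)) h) a.
Proof.
rewrite big_ord_recl excursion_termE hit_term0 /trans w_diag mul0r scale0r add0r.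
under eq_bigr do rewrite excursion_termE hit_termS.
rewrite /conn_op exchange_big -sumrB; apply: eq_bigr => y ya.
rewrite -scaler_sumr -mulmx_sumr -scalerBr -mulmxBr.
by rewrite [h y in RHS](harmonic_expand N ya) addrK.
Qed.

Lemma Omega1_harmonic : Omega1 w sigma a = conn_op (predC1 a) h a.
Proof.
apply/matrixP => r c; rewrite mxE; apply: cvg_lim => //.
apply/cvgrPdist_lt => eps eps_gt0.
have e_gt0 : 0 < eps / 2 by rewrite divr_gt0.
have a_notin : ~~ predC1 a a by rewrite /= eqxx.
have [N Nh] := iter_conn_op_vanish h a_notin (exprn_gt0 2 e_gt0).
exists N.+1 => // -[|M] //= NM.
rewrite excursion_partial_sum !mxE opprB addrC subrK.
apply: le_lt_trans (conn_op_entry_le _ _ _ (ltW e_gt0) _) _.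
  by move=> y ya; rewrite ltW ?Nh.
by rewrite ltr_pdivrMr // ltr_pMr // ltr1n.
Qed.

Lemma lap_app_excursion : deg w a != 0 ->
  lap_app h a = deg w a *: (1%:M - Omega1 w sigma a).
Proof.
move=> da; rewrite Omega1_harmonic lap_appE h_a scalerBr; congr (_ - _).
rewrite (bigD1 a) //= w_diag scale0r add0r /conn_op scaler_sumr.
by apply: eq_bigr => y _; rewrite scalerA /trans mulrCA divff // mulr1.
Qed.

End Excursions.

Section BlockColumns.
Variable A : seq 'I_n.

Definition colv k (f : 'I_n -> 'M[R]_(d, k)) : 'M[R]_(\sum_(r < size A) d, k) :=
  \mxcol_r (f (tnth (in_tuple A) r) : 'M[R]_((fun _ => d) r, k)).

Definition col_fun k (c : 'M[R]_(\sum_(r < size A) d, k)) x : 'M[R]_(d, k) :=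
  if [pick r | tnth (in_tuple A) r == x] is Some r then submxcol c r else 0.

Lemma colvD k (f g : 'I_n -> 'M[R]_(d, k)) :
  colv (fun x => f x + g x) = colv f + colv g.
Proof. exact: mxcolD. Qed.

Lemma colv_eq0 k (f : 'I_n -> 'M[R]_(d, k)) :
  colv f = 0 <-> (forall x, x \in A -> f x = 0).
Proof.
split=> [/mxcolP f0 x /(tnthP (in_tuple A)) [r ->]|f0].
  by have := f0 r; rewrite mxcolK submxcol0.
by apply/mxcolP => r; rewrite mxcolK submxcol0 f0 ?mem_tnth.
Qed.

Lemma col_fun_notin k (c : 'M[R]_(\sum_(r < size A) d, k)) x :
  x \notin A -> col_fun c x = 0.
Proof.
move=> xA; rewrite /col_fun; case: pickP => // r /eqP xr.
by move: xA; rewrite -xr mem_tnth.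
Qed.

Hypothesis A_uniq : uniq A.

Lemma col_funK k (c : 'M[R]_(\sum_(r < size A) d, k)) : colv (col_fun c) = c.
Proof.
have tA_inj : injective (tnth (in_tuple A)) by apply/tuple_uniqP.
apply/mxcolP => r; rewrite mxcolK /col_fun; case: pickP => [r' /eqP|/(_ r)].
  by move/tA_inj ->.
by rewrite eqxx.
Qed.

End BlockColumns.

Section KronReduction.
Variable S : seq 'I_n.
Hypotheses (S_uniq : uniq S) (S_neq_nil : S != [::]).
Let Sc := [seq x <- enum 'I_n | x \notin S].

Lemma mem_Sc x : (x \in Sc) = (x \notin S).
Proof. by rewrite mem_filter mem_enum andbT. Qed.

Lemma Sc_uniq : uniq Sc.
Proof. exact/filter_uniq/enum_uniq. Qed.

Lemma sum_split_S k (F : 'I_n -> 'M[R]_(d, k)) :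
  \sum_x F x = \sum_(q < size S) F (tnth (in_tuple S) q) +
               \sum_(r < size Sc) F (tnth (in_tuple Sc) r).
Proof.
rewrite -!(big_tuple _ _ _ xpredT) /= big_filter big_enum_cond (big_uniq _ S_uniq).
by rewrite [LHS](bigID (mem S)).
Qed.

Lemma colv_lap_app (A : seq 'I_n) k (f : 'I_n -> 'M[R]_(d, k)) :
  colv A (lap_app f) =
  lap_sub w sigma A S *m colv S f + lap_sub w sigma A Sc *m colv Sc f.
Proof.
rewrite /lap_sub /colv !mul_mxblock_mxrow -mxcolD; apply/eq_mxcolP => p.
exact: sum_split_S.
Qed.

Lemma colv_col_fun_compl k (c : 'M[R]_(\sum_(r < size S) d, k)) :
  colv Sc (col_fun c) = 0.
Proof. by apply/colv_eq0 => x; rewrite mem_Sc => /col_fun_notin. Qed.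

Lemma colv_col_fun_S k (c : 'M[R]_(\sum_(r < size Sc) d, k)) :
  colv S (col_fun c) = 0.
Proof. by apply/colv_eq0 => x xS; rewrite col_fun_notin // mem_Sc xS. Qed.

Lemma lap_sub_compl_unitmx : lap_sub w sigma Sc Sc \in unitmx.
Proof.
apply: mulmx_eq0_unitmx => c Lc0.
have /hasP [a aS _] : has predT S by rewrite has_predT lt0n size_eq0.
have f_harm x : x \in Sc -> lap_app (col_fun c) x = 0.
  move: x; apply/colv_eq0.
  by rewrite colv_lap_app colv_col_fun_S col_funK ?Sc_uniq // mulmx0 add0r.
have f0 := harmonic_eq0 (W := mem Sc) (a := a) _ _ f_harm.
rewrite -(col_funK Sc_uniq c); apply/colv_eq0 => x _; apply: f0.
- by rewrite inE mem_Sc aS.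
- by move=> y; rewrite inE => /col_fun_notin ->.
Qed.

Definition kron_reduced : 'M[R]_(\sum_(r < size S) d) :=
  schurD (lap_sub w sigma S S) (lap_sub w sigma S Sc)
         (lap_sub w sigma Sc S) (lap_sub w sigma Sc Sc).

Lemma colv_lap_app_harmonic k (f : 'I_n -> 'M[R]_(d, k)) :
  (forall x, x \notin S -> lap_app f x = 0) ->
  colv S (lap_app f) = kron_reduced *m colv S f.
Proof.
move=> f_harm.
have : colv Sc (lap_app f) = 0 by apply/colv_eq0 => x; rewrite mem_Sc; exact: f_harm.
rewrite colv_lap_app => /eqP; rewrite addrC addr_eq0 => /eqP LfSc.
have fSc : colv Sc f =
    - (invmx (lap_sub w sigma Sc Sc) *m lap_sub w sigma Sc S *m colv S f).
  by rewrite -[LHS](mulKmx lap_sub_compl_unitmx) LfSc mulmxN mulmxA.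
rewrite colv_lap_app fSc mulmxN !mulmxA -mulmxBl.
by rewrite /kron_reduced /schurD (pinv_invmx lap_sub_compl_unitmx).
Qed.

Lemma harmonic_extension k (g : 'M[R]_(\sum_(r < size S) d, k)) :
  exists f : 'I_n -> 'M[R]_(d, k),
    (forall x, x \notin S -> lap_app f x = 0) /\ colv S f = g.
Proof.
pose c := - (invmx (lap_sub w sigma Sc Sc) *m lap_sub w sigma Sc S *m g).
pose f x := col_fun g x + col_fun c x.
have fS : colv S f = g by rewrite colvD col_funK // colv_col_fun_S addr0.
have fSc : colv Sc f = c by rewrite colvD col_funK ?Sc_uniq // colv_col_fun_compl add0r.
exists f; split => // x xS.
suff /colv_eq0 f_harm : colv Sc (lap_app f) = 0 by apply: f_harm; rewrite mem_Sc.
rewrite colv_lap_app fS fSc /c mulmxN !mulmxA.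
by rewrite (mulmxV lap_sub_compl_unitmx) mul1mx addrN.
Qed.

End KronReduction.

Section Pair.
Variables i j : 'I_n.
Hypothesis ij : i != j.
Let S := [:: i; j].
Let v := tnth (in_tuple S).

Let S_uniq : uniq S. Proof. by rewrite /= inE ij. Qed.
Let S_neq_nil : S != [::]. Proof. by []. Qed.

Lemma pair_harmonic k (f : 'I_n -> 'M[R]_(d, k)) :
  (forall x, x \notin S -> lap_app f x = 0) ->
  forall p, lap_app f (v p) = \sum_q cond_blk w sigma i j p q *m f (v q).
Proof.
move=> f_harm; have := colv_lap_app_harmonic S_uniq S_neq_nil f_harm.
by rewrite -[kron_reduced _]submxblockK /colv mul_mxblock_mxrow => /eq_mxcolP.
Qed.

Lemma pair_extension k (g : 'I_2 -> 'M[R]_(d, k)) :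
  exists f : 'I_n -> 'M[R]_(d, k),
    (forall x, x \notin S -> lap_app f x = 0) /\ forall q, f (v q) = g q.
Proof.
have [f [f_harm fS]] :=
  harmonic_extension S_uniq S_neq_nil (\mxcol_q (g q : 'M[R]_((fun _ => d) q, k))).
by exists f; split => //; apply/eq_mxcolP.
Qed.

Lemma pair_harmonic_off k (f : 'I_n -> 'M[R]_(d, k)) (p q : 'I_2) : p != q ->
  (forall x, x \notin S -> lap_app f x = 0) -> lap_app f (v q) = 0 ->
  forall x, x != v p -> lap_app f x = 0.
Proof.
move=> pq f_harm fq x; case xS: (x \in S); last by rewrite f_harm ?xS.
case/(tnthP (in_tuple S)): xS => r ->; rewrite -/v.
case: (eqVneq r p) => [-> | ]; first by rewrite eqxx.
by rewrite (ord2_neqE _ pq) => /eqP ->.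
Qed.

Lemma cond_blk_unitmx (p q : 'I_2) : p != q -> cond_blk w sigma i j q q \in unitmx.
Proof.
move=> pq; have qp : q != p by rewrite eq_sym.
apply: mulmx_eq0_unitmx => u Cu0.
have [f [f_harm fS]] := pair_extension (fun r => if r == p then 0 else u).
have fq : lap_app f (v q) = 0.
  by rewrite pair_harmonic // (sum_ord2 _ qp) !fS eqxx (negbTE qp) mulmx0 addr0.
have a_notin : ~~ predC1 (v p) (v p) by rewrite /= eqxx.
have f_off x : ~~ predC1 (v p) x -> f x = 0 by move=> /negPn/eqP ->; rewrite fS eqxx.
have := fS q; rewrite (negbTE qp) => <-.
exact: harmonic_eq0 a_notin f_off (pair_harmonic_off pq f_harm fq) _.
Qed.

Lemma schur_pair (p q : 'I_2) : p != q ->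
  cond_blk w sigma i j p p -
    cond_blk w sigma i j p q *m pinv (cond_blk w sigma i j q q) *m
    cond_blk w sigma i j q p
  = deg w (v p) *: (1%:M - Omega1 w sigma (v p)).
Proof.
move=> pq; have qp : q != p by rewrite eq_sym.
have Cq_unit := cond_blk_unitmx pq.
set beta := - (invmx (cond_blk w sigma i j q q) *m cond_blk w sigma i j q p).
have [f [f_harm fS]] := pair_extension (fun r => if r == p then 1%:M else beta).
have fq : lap_app f (v q) = 0.
  rewrite pair_harmonic // (sum_ord2 _ qp) !fS eqxx (negbTE qp) mulmx1 /beta.
  by rewrite mulmxN mulmxA (mulmxV Cq_unit) mul1mx addNr.
have v_inj : injective v by apply/tuple_uniqP.
have dp : deg w (v p) != 0.
  by apply: (@connected_deg_neq0 _ (v q)); rewrite (inj_eq v_inj).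
have fp : f (v p) = 1%:M by rewrite fS eqxx.
rewrite -(lap_app_excursion fp (pair_harmonic_off pq f_harm fq) dp).
rewrite pair_harmonic // (sum_ord2 _ pq) !fS eqxx (negbTE qp) mulmx1 /beta.
by rewrite mulmxN mulmxA pinv_invmx.
Qed.

End Pair.
End ConnectionWalk.

Theorem lemma5p5 (R : realType) (n d : nat) (w : 'I_n -> 'I_n -> R)
    (sigma : 'I_n -> 'I_n -> 'M[R]_d) :
  connection_graph w sigma ->
  forall i j : 'I_n, i != j ->
    schurD (cond_blk w sigma i j 0 0) (cond_blk w sigma i j 0 1)
           (cond_blk w sigma i j 1 0) (cond_blk w sigma i j 1 1)
      = deg w i *: (1%:M - Omega1 w sigma i)
 /\ schurA (cond_blk w sigma i j 0 0) (cond_blk w sigma i j 0 1)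
           (cond_blk w sigma i j 1 0) (cond_blk w sigma i j 1 1)
      = deg w j *: (1%:M - Omega1 w sigma j).
Proof.
move=> [[_ w_ge0 w_diag conn] [_ sigma_unitary]] i j ij.
have sigma_orth x y : 0 < w x y -> (sigma x y)^T *m sigma x y = 1%:M.
  by case/sigma_unitary.
split.
- exact: (schur_pair w_ge0 w_diag conn sigma_orth ij (p := 0) (q := 1)).
- exact: (schur_pair w_ge0 w_diag conn sigma_orth ij (p := 1) (q := 0)).
Qed.
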